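(* Let $f,g:\mathbb R\to\mathbb R_{+\infty}$ be $\mathcal H$-convex with $\operatorname{dom} f\cap\operatorname{dom} g\ne\emptyset$. Then $\operatorname{cl}(\operatorname{supp} f+\operatorname{supp} g)$ is $\mathcal H$-convex, and $$\operatorname{supp}(f+g)=\operatorname{cl}(\operatorname{supp} f+\operatorname{supp} g).$$ Equivalently, $\operatorname{cl}(\operatorname{epi} f^*+\operatorname{epi} g^* )=\operatorname{epi}(f+g)^*$ in $\mathcal L\times\mathbb R$.
   Context: $X=\mathbb R$; $\mathbb R_{+\infty}=\mathbb R\cup\{+\infty\}$. For $a,b\in\mathbb R$, $\phi_a(x)=ax^2$, $\psi_{a,b}(x)=ax^2+b$; $\mathcal L=\{\phi_a:a\in\mathbb R\}$, $\mathcal H=\{\psi_{a,b}:a,b\in\mathbb R\}$, both with the pointwise convergence topology (under which $\phi_a\mapsto a$ and $\psi_{a,b}\mapsto(a,b)$ are homeomorphisms onto $\mathbb R$ and $\mathbb R^2$); $\mathcal L\times\mathbb R$ has the product topology; $\operatorname{cl}$ is closure. $\operatorname{dom} f=\{x:f(x)<+\infty\}$; $\operatorname{supp} f=\{h\in\mathcal H:h\le f\}$; $f$ is $\mathcal H$-convex if $f=\sup_{h\in H}h$ for some $H\subset\mathcal H$; a set $C\subset\mathcal H$ is $\mathcal H$-convex if for every $h_0\in\mathcal H\setminus C$ there is $x$ with $h_0(x)>\sup_{h\in C}h(x)$. $f^*(\phi_a)=\sup_x(ax^2-f(x))$ and $\operatorname{epi} f^*=\{(l,r)\in\mathcal L\times\mathbb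 R:f^*(l)\le r\}$. Sums of sets are Minkowski sums. *)

From Stdlib Require Import Reals.
Open Scope R_scope.

Inductive ER : Type := Fin (r : R) | PInf.

Definition ER_le (r : R) (e : ER) : Prop :=
  match e with Fin v => r <= v | PInf => True end.

Definition ER_add (e1 e2 : ER) : ER :=
  match e1, e2 with Fin a, Fin b => Fin (a + b) | _, _ => PInf end.

(* H = { psi_{a,b} : x |-> a x^2 + b }, identified with R x R via (a,b);
   this identification is a homeomorphism for the pointwise topology. *)
Definition psi (h : R * R) (x : R) : R := fst h * x ^ 2 + snd h.

Definition in_dom (f : R -> ER) (x : R) : Prop := f x <> PInf.

Definition supp (f : R -> ER) : (R * R) -> Prop :=
  fun h => forall x, ER_le (psi h x) (f x).

Definition is_sup_at (H : (R * R) -> Prop) (x : R) (e : ER) : Prop :=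
  match e with
  | Fin r => is_lub (fun y => exists h, H h /\ y = psi h x) r
  | PInf => forall M, exists h, H h /\ M < psi h x
  end.

Definition H_convex_fun (f : R -> ER) : Prop :=
  exists H : (R * R) -> Prop, forall x, is_sup_at H x (f x).

(* a real number y is strictly greater than sup_{h in C} h(x) (in [-oo,+oo]) *)
Definition gt_sup (C : (R * R) -> Prop) (x y : R) : Prop :=
  exists M, M < y /\ forall h, C h -> psi h x <= M.

Definition H_convex_set (C : (R * R) -> Prop) : Prop :=
  forall h0, ~ C h0 -> exists x, gt_sup C x (psi h0 x).

Definition msum (A B : (R * R) -> Prop) : (R * R) -> Prop :=
  fun h => exists h1 h2, A h1 /\ B h2 /\ h = (fst h1 + fst h2, snd h1 + snd h2).

(* closure in R x R (product = pointwise-convergence topology) *)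
Definition closure (A : (R * R) -> Prop) : (R * R) -> Prop :=
  fun h => forall eps, 0 < eps -> exists h', A h' /\
     Rabs (fst h' - fst h) < eps /\ Rabs (snd h' - snd h) < eps.

(* epi f^* = { (phi_a, r) : f^*(phi_a) <= r }, f^*(phi_a) = sup_x (a x^2 - f x),
   terms with f x = +oo contribute -oo. *)
Definition epi_conj (f : R -> ER) : (R * R) -> Prop :=
  fun p => forall x, match f x with
                     | Fin v => fst p * x ^ 2 - v <= snd p
                     | PInf => True
                     end.

Definition set_eq (A B : (R * R) -> Prop) : Prop := forall h, A h <-> B h.

From Stdlib Require Import Reals Lra Psatz Classical.
Open Scope R_scope.

(* Every element of cl(supp f + supp g) lies below f + g, and supp of any
   function is closed and H-convex.  Conversely, let h = (a, b) <= f + g.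
   The sup-representations of f and g show that at every x the value h(x) is
   approached from below by elements q of supp f + supp g.  Writing t = x^2,
   this says that a t + b never exceeds the support function of the convex
   set supp f + supp g in a direction (t, 1) with t >= 0.  A two-dimensional
   separation argument then puts (a, b) in the closure of that set; the
   missing direction t = +oo is ruled out by the finiteness of f + g at a
   common point of the domains.  The statement about epi f^* is the same one
   after the reflection (a, b) |-> (a, -b). *)

Definition convex_set (Q : R * R -> Prop) : Prop :=
  forall q1 q2 l, Q q1 -> Q q2 -> 0 <= l <= 1 ->
    Q (l * fst q1 + (1 - l) * fst q2, l * snd q1 + (1 - l) * snd q2).

Section QuadrantSeparation.

Variable Q : R * R -> Prop.
Hypothesis Q_convex : convex_set Q.
Hypothesis Q_misses_quadrant : forall q, Q q -> fst q <= 0 \/ snd q <= 0.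

Lemma upper_point_left r q :
  Q r -> 0 < fst r -> Q q -> 0 < snd q -> fst q < 0.
Proof.
  intros Qr Hr Qq Hq.
  destruct (Q_misses_quadrant r Qr) as [|Hr2]; [lra|].
  destruct (Q_misses_quadrant q Qq) as [[Hq1|Hq1]|]; [exact Hq1| |lra].
  exfalso.
  set (l := snd q / (2 * (snd q - snd r))).
  assert (Hl : l * (snd q - snd r) = snd q / 2) by (unfold l; field; lra).
  assert (Hl0 : 0 < l) by (unfold l; apply Rdiv_lt_0_compat; lra).
  assert (Hl1 : l <= 1) by nra.
  destruct (Q_misses_quadrant _ (Q_convex r q l Qr Qq (conj (Rlt_le _ _ Hl0) Hl1)))
    as [H|H]; simpl in H; nra.
Qed.

(* If the cross product were positive, the segment from q to r would cross
   the vertical axis strictly above the origin. *)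
Lemma cross_nonpos r q :
  Q r -> 0 < fst r -> Q q -> 0 < snd q -> fst r * snd q <= snd r * fst q.
Proof.
  intros Qr Hr Qq Hq.
  pose proof (upper_point_left r q Qr Hr Qq Hq) as Hq1.
  apply Rnot_lt_le; intro Hcross.
  set (l := - fst q / (fst r - fst q)).
  assert (Hl : l * (fst r - fst q) = - fst q) by (unfold l; field; lra).
  assert (Hl01 : 0 <= l <= 1) by (split; nra).
  pose proof (upper_point_left r _ Qr Hr (Q_convex r q l Qr Qq Hl01)) as H; simpl in H.
  assert (E1 : l * fst r + (1 - l) * fst q = 0) by nra.
  assert (E2 : l * snd r + (1 - l) * snd q
               = (fst r * snd q - snd r * fst q) / (fst r - fst q))
    by (unfold l; field; lra).
  rewrite E1, E2 in H.
  pose proof (Rdiv_lt_0_compat (fst r * snd q - snd r * fst q) (fst r - fst q)).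
  lra.
Qed.

Lemma slope_le r q :
  Q r -> 0 < fst r -> Q q -> 0 < snd q -> snd q / - fst q <= - snd r / fst r.
Proof.
  intros Qr Hr Qq Hq.
  pose proof (upper_point_left r q Qr Hr Qq Hq) as Hq1.
  pose proof (cross_nonpos r q Qr Hr Qq Hq) as Hcross.
  set (s := snd q / - fst q); set (c := - snd r / fst r).
  assert (Hs : s * - fst q = snd q) by (unfold s; field; lra).
  assert (Hc : c * fst r = - snd r) by (unfold c; field; lra).
  apply Rnot_lt_le; intro Hlt.
  pose proof (Rmult_lt_0_compat (s - c) (fst r * - fst q)) as Hpos.
  nra.
Qed.

Lemma quadrant_separation :
  (forall q, Q q -> fst q <= 0) \/
  exists t, 0 <= t /\ forall q, Q q -> fst q * t + snd q <= 0.
Proof.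
  destruct (classic (exists r, Q r /\ 0 < fst r)) as [[r [Qr Hr]] | Nr].
  2: { left; intros q Qq; apply Rnot_lt_le; intro; apply Nr; eauto. }
  right.
  destruct (classic (exists q, Q q /\ 0 < snd q)) as [[q0 [Qq0 Hq0]] | Nq].
  2: { exists 0; split; [lra|]; intros q Qq.
       rewrite Rmult_0_r, Rplus_0_l; apply Rnot_lt_le; intro; apply Nq; eauto. }
  set (slopes := fun s => exists q, Q q /\ 0 < snd q /\ s = snd q / - fst q).
  assert (Hbound : forall p, Q p -> 0 < fst p ->
                   is_upper_bound slopes (- snd p / fst p)).
  { intros p Qp Hp s [q [Qq [Hq ->]]]; exact (slope_le p q Qp Hp Qq Hq). }
  destruct (completeness slopes) as [t [Hub Hlub]].
  { exists (- snd r / fst r); exact (Hbound r Qr Hr). }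
  { exists (snd q0 / - fst q0), q0; auto. }
  assert (Ht : 0 <= t).
  { pose proof (upper_point_left r q0 Qr Hr Qq0 Hq0).
    pose proof (Rdiv_lt_0_compat (snd q0) (- fst q0) Hq0).
    pose proof (Hub _ (ex_intro _ q0 (conj Qq0 (conj Hq0 eq_refl)))); lra. }
  exists t; split; [exact Ht|]; intros q Qq.
  destruct (Rlt_le_dec 0 (fst q)) as [H1|H1].
  - assert (Htq : t <= - snd q / fst q) by exact (Hlub _ (Hbound q Qq H1)).
    assert (E : - snd q / fst q * fst q = - snd q) by (field; lra).
    nra.
  - destruct (Rlt_le_dec 0 (snd q)) as [H2|H2]; [|nra].
    pose proof (upper_point_left r q Qr Hr Qq H2).
    assert (Hsq : snd q / - fst q <= t) by (apply Hub; exists q; auto).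
    assert (E : snd q / - fst q * - fst q = snd q) by (field; lra).
    nra.
Qed.

End QuadrantSeparation.

Definition dominated_by_support (Q : R * R -> Prop) (a b : R) : Prop :=
  forall t eta, 0 <= t -> 0 < eta ->
    exists q, Q q /\ a * t + b - eta < fst q * t + snd q.

Lemma convex_dominated_near_above (Q : R * R -> Prop) a b t0 K eps :
  convex_set Q -> 0 <= t0 -> (forall q, Q q -> fst q * t0 + snd q <= K) ->
  dominated_by_support Q a b -> 0 < eps ->
  exists q, Q q /\ a - eps < fst q /\ b - eps < snd q.
Proof.
  intros Qconv Ht0 Hbd Hdom Heps.
  apply NNPP; intro Nq.
  set (a' := a - eps); set (b' := b - eps).
  set (Q' := fun q : R * R => Q (fst q + a', snd q + b')).
  assert (Q'_of : forall q, Q q -> Q' (fst q - a', snd q - b')).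
  { intros [u v] Qq; unfold Q'; simpl.
    replace (u - a' + a') with u by ring; replace (v - b' + b') with v by ring.
    exact Qq. }
  assert (Q'conv : convex_set Q').
  { intros q1 q2 l H1 H2 Hl; unfold Q'; simpl.
    pose proof (Qconv _ _ l H1 H2 Hl) as H; simpl in H.
    replace (l * fst q1 + (1 - l) * fst q2 + a')
      with (l * (fst q1 + a') + (1 - l) * (fst q2 + a')) by ring.
    replace (l * snd q1 + (1 - l) * snd q2 + b')
      with (l * (snd q1 + b') + (1 - l) * (snd q2 + b')) by ring.
    exact H. }
  assert (Q'miss : forall q, Q' q -> fst q <= 0 \/ snd q <= 0).
  { intros q Qq.
    destruct (Rle_dec (fst q) 0) as [|H1]; [left; assumption|].
    destruct (Rle_dec (snd q) 0) as [|H2]; [right; assumption|].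
    exfalso; apply Nq; exists (fst q + a', snd q + b'); simpl.
    unfold a', b' in *; repeat split; [exact Qq| lra | lra]. }
  destruct (quadrant_separation Q' Q'conv Q'miss) as [Hvert | [t [Ht Hsep]]].
  - (* a direction (T, 1) steep enough that the bound at t0 beats (a, b) *)
    set (c := K + 1 - a * t0 - b).
    set (T := t0 + Rabs c / eps).
    assert (HT : eps * (T - t0) = Rabs c) by (unfold T; field; lra).
    pose proof (Rle_abs c).
    pose proof (Rabs_pos c).
    assert (HTt0 : t0 <= T) by nra.
    destruct (Hdom T 1) as [q [Qq Hq]]; [lra | lra |].
    pose proof (Hvert _ (Q'_of q Qq)) as H1; simpl in H1.
    pose proof (Hbd q Qq).
    unfold c, a' in *; nra.
  - destruct (Hdom t eps Ht Heps) as [q [Qq Hq]].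
    pose proof (Hsep _ (Q'_of q Qq)) as H; simpl in H.
    unfold a', b' in *; nra.
Qed.

Definition ER_lt (r : R) (e : ER) : Prop :=
  match e with Fin v => r < v | PInf => True end.

Lemma is_sup_at_le S x e h : is_sup_at S x e -> S h -> ER_le (psi h x) e.
Proof.
  destruct e as [r|]; simpl; [intros [Hub _] Sh; apply Hub; eauto | trivial].
Qed.

Lemma is_sup_at_exceeds S x e y :
  is_sup_at S x e -> ER_lt y e -> exists h, S h /\ y < psi h x.
Proof.
  destruct e as [r|]; simpl; intros Hsup Hy; [|exact (Hsup y)].
  destruct Hsup as [_ Hlub]; apply NNPP; intro N.
  assert (r <= y); [|lra].
  apply Hlub; intros z [h [Sh ->]]; apply Rnot_lt_le; intro; apply N; eauto.
Qed.

Lemma is_sup_at_supp (f : R -> ER) S h :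
  (forall x, is_sup_at S x (f x)) -> S h -> supp f h.
Proof. intros Hf Sh x; exact (is_sup_at_le S x (f x) h (Hf x) Sh). Qed.

Lemma ER_le_add_split c e1 e2 eta :
  ER_le c (ER_add e1 e2) -> 0 < eta ->
  exists y1 y2, ER_lt y1 e1 /\ ER_lt y2 e2 /\ c - eta = y1 + y2.
Proof.
  intros Hc Heta; destruct e1 as [r1|], e2 as [r2|]; simpl in *.
  - exists (r1 - eta / 2), (c - eta - (r1 - eta / 2)); repeat split; lra.
  - exists (r1 - 1), (c - eta - (r1 - 1)); repeat split; [lra | ring].
  - exists (c - eta - (r2 - 1)), (r2 - 1); repeat split; [lra | ring].
  - exists 0, (c - eta); repeat split; ring.
Qed.

Lemma psi_add h1 h2 x :
  psi (fst h1 + fst h2, snd h1 + snd h2) x = psi h1 x + psi h2 x.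
Proof. unfold psi; simpl; ring. Qed.

Lemma psi_sqrt h t : 0 <= t -> psi h (sqrt t) = fst h * t + snd h.
Proof. intros Ht; unfold psi; rewrite pow2_sqrt; auto. Qed.

Lemma supp_le F h h' :
  supp F h -> fst h' <= fst h -> snd h' <= snd h -> supp F h'.
Proof.
  intros H Ha Hb x; specialize (H x); destruct (F x); simpl in *; [|exact I].
  unfold psi in *; pose proof (pow2_ge_0 x); nra.
Qed.

Lemma supp_convex F : convex_set (supp F).
Proof.
  intros h1 h2 l H1 H2 Hl x; specialize (H1 x); specialize (H2 x).
  destruct (F x); simpl in *; [|exact I].
  unfold psi in *; simpl; nra.
Qed.

Lemma supp_closed F h : closure (supp F) h -> supp F h.
Proof.
  intros Hc x; destruct (F x) as [r|] eqn:E; simpl; [|exact I].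
  apply Rnot_lt_le; intro Hlt.
  pose proof (pow2_ge_0 x).
  set (eps := (psi h x - r) / (x ^ 2 + 2)).
  assert (Heps : eps * (x ^ 2 + 2) = psi h x - r) by (unfold eps; field; lra).
  assert (Hpos : 0 < eps) by (unfold eps; apply Rdiv_lt_0_compat; lra).
  destruct (Hc eps Hpos) as [h' [H' [A B]]].
  specialize (H' x); rewrite E in H'; simpl in H'.
  apply Rabs_def2 in A; apply Rabs_def2 in B.
  unfold psi in *; nra.
Qed.

Lemma supp_H_convex F : H_convex_set (supp F).
Proof.
  intros h0 Hn; apply not_all_ex_not in Hn as [x Hx].
  destruct (F x) as [v|] eqn:E; simpl in Hx; [|tauto].
  exists x, v; split; [lra|].
  intros h Hh; specialize (Hh x); rewrite E in Hh; exact Hh.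
Qed.

Lemma H_convex_set_eq A B : set_eq A B -> H_convex_set A -> H_convex_set B.
Proof.
  intros HAB HA h0 Hn; destruct (HA h0) as [x [M [HM Hx]]].
  - intro; apply Hn, HAB; assumption.
  - exists x, M; split; [exact HM|]; intros h Hh; apply Hx, HAB, Hh.
Qed.

Lemma closure_mono (A B : R * R -> Prop) :
  (forall h, A h -> B h) -> forall h, closure A h -> closure B h.
Proof.
  intros HAB h Hh eps Heps; destruct (Hh eps Heps) as [h' [Ah' Hclose]].
  exists h'; auto.
Qed.

Lemma msum_convex A B : convex_set A -> convex_set B -> convex_set (msum A B).
Proof.
  intros HA HB q1 q2 l [a1 [b1 [A1 [B1 ->]]]] [a2 [b2 [A2 [B2 ->]]]] Hl.
  exists (l * fst a1 + (1 - l) * fst a2, l * snd a1 + (1 - l) * snd a2),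
         (l * fst b1 + (1 - l) * fst b2, l * snd b1 + (1 - l) * snd b2).
  repeat split; [apply HA | apply HB | simpl; f_equal; ring | ..]; assumption.
Qed.

Lemma msum_supp_le f g q q' :
  msum (supp f) (supp g) q -> fst q' <= fst q -> snd q' <= snd q ->
  msum (supp f) (supp g) q'.
Proof.
  intros [h1 [h2 [H1 [H2 ->]]]] Ha Hb; simpl in Ha, Hb.
  exists (fst q' - fst h2, snd q' - snd h2), h2.
  repeat split; [apply (supp_le f h1); simpl; [exact H1 | lra | lra] | exact H2 |].
  destruct q'; simpl; f_equal; ring.
Qed.

Lemma msum_supp_sub f g h :
  msum (supp f) (supp g) h -> supp (fun x => ER_add (f x) (g x)) h.
Proof.
  intros [h1 [h2 [H1 [H2 ->]]]] x; specialize (H1 x); specialize (H2 x).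
  rewrite psi_add; destruct (f x), (g x); simpl in *; lra || exact I.
Qed.

Section SumOfHConvex.

Variables (f g : R -> ER) (Sf Sg : R * R -> Prop).
Hypothesis Hf : forall x, is_sup_at Sf x (f x).
Hypothesis Hg : forall x, is_sup_at Sg x (g x).

Lemma supp_sum_dominated h :
  supp (fun x => ER_add (f x) (g x)) h ->
  dominated_by_support (msum (supp f) (supp g)) (fst h) (snd h).
Proof.
  intros Hh t eta Ht Heta.
  destruct (ER_le_add_split _ _ _ eta (Hh (sqrt t)) Heta) as [y1 [y2 [L1 [L2 E]]]].
  destruct (is_sup_at_exceeds _ _ _ _ (Hf (sqrt t)) L1) as [h1 [S1 H1]].
  destruct (is_sup_at_exceeds _ _ _ _ (Hg (sqrt t)) L2) as [h2 [S2 H2]].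
  exists (fst h1 + fst h2, snd h1 + snd h2); split.
  - exists h1, h2; repeat split; [exact (is_sup_at_supp f Sf h1 Hf S1) |
                                    exact (is_sup_at_supp g Sg h2 Hg S2)].
  - rewrite <- !psi_sqrt by exact Ht; rewrite psi_add; lra.
Qed.

Lemma supp_sum_in_closure x0 h :
  in_dom f x0 -> in_dom g x0 ->
  supp (fun x => ER_add (f x) (g x)) h -> closure (msum (supp f) (supp g)) h.
Proof.
  unfold in_dom; intros D1 D2 Hh eps Heps.
  destruct (f x0) as [u0|] eqn:E0; [|contradiction].
  destruct (g x0) as [v0|] eqn:F0; [|contradiction].
  destruct (convex_dominated_near_above (msum (supp f) (supp g)) (fst h) (snd h)
              (x0 ^ 2) (u0 + v0) eps) as [q [Qq [Ha Hb]]].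
  - apply msum_convex; apply supp_convex.
  - apply pow2_ge_0.
  - intros q Qq; pose proof (msum_supp_sub f g q Qq x0) as H; simpl in H.
    rewrite E0, F0 in H; exact H.
  - exact (supp_sum_dominated h Hh).
  - exact Heps.
  - exists (Rmin (fst q) (fst h), Rmin (snd q) (snd h)); simpl; split.
    + apply msum_supp_le with q; [exact Qq | apply Rmin_l | apply Rmin_l].
    + split; unfold Rmin; destruct Rle_dec; apply Rabs_def1; lra.
Qed.

End SumOfHConvex.

Definition flip (p : R * R) : R * R := (fst p, - snd p).

Lemma flip_flip p : flip (flip p) = p.
Proof. destruct p; unfold flip; simpl; f_equal; ring. Qed.

Lemma epi_conj_flip F p : epi_conj F p <-> supp F (flip p).
Proof.
  split; intros H x; specialize (H x); destruct (F x); simpl in *; auto;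
    unfold psi in *; simpl in *; lra.
Qed.

Lemma msum_flip (A B A' B' : R * R -> Prop) :
  (forall h, A h <-> A' (flip h)) -> (forall h, B h <-> B' (flip h)) ->
  forall p, msum A B p <-> msum A' B' (flip p).
Proof.
  intros HA HB p; split.
  - intros [h1 [h2 [H1 [H2 ->]]]].
    exists (flip h1), (flip h2); repeat split; [apply HA | apply HB | ]; auto.
    unfold flip; simpl; f_equal; ring.
  - intros [h1 [h2 [H1 [H2 E]]]].
    exists (flip h1), (flip h2); repeat split;
      [apply HA; rewrite flip_flip | apply HB; rewrite flip_flip | ]; auto.
    rewrite <- (flip_flip p), E; unfold flip; simpl; f_equal; ring.
Qed.

Lemma closure_flip (A A' : R * R -> Prop) :
  (forall h, A h <-> A' (flip h)) -> forall p, closure A p <-> closure A' (flip p).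
Proof.
  intros HA p; split; intros Hc eps Heps; destruct (Hc eps Heps) as [h [Ah [H1 H2]]];
    exists (flip h); split.
  - apply HA, Ah.
  - unfold flip; simpl; rewrite <- Rabs_Ropp with (x := - snd h - - snd p).
    replace (- (- snd h - - snd p)) with (snd h - snd p) by ring; auto.
  - apply HA; rewrite flip_flip; exact Ah.
  - unfold flip in *; simpl in *; rewrite <- Rabs_Ropp with (x := - snd h - snd p).
    replace (- (- snd h - snd p)) with (snd h - - snd p) by ring; auto.
Qed.

Theorem mainTheorem14 (f g : R -> ER) :
  H_convex_fun f -> H_convex_fun g ->
  (exists x, in_dom f x /\ in_dom g x) ->
  H_convex_set (closure (msum (supp f) (supp g))) /\
  set_eq (supp (fun x => ER_add (f x) (g x))) (closure (msum (supp f) (supp g))) /\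
  set_eq (closure (msum (epi_conj f) (epi_conj g)))
         (epi_conj (fun x => ER_add (f x) (g x))).
Proof.
  intros [Sf Hf] [Sg Hg] [x0 [D1 D2]].
  assert (Hsupp : set_eq (supp (fun x => ER_add (f x) (g x)))
                         (closure (msum (supp f) (supp g)))).
  { intros h; split.
    - exact (supp_sum_in_closure f g Sf Sg Hf Hg x0 h D1 D2).
    - intros Hh; apply supp_closed, (closure_mono _ _ (msum_supp_sub f g) h Hh). }
  split; [exact (H_convex_set_eq _ _ Hsupp (supp_H_convex _)) |].
  split; [exact Hsupp |].
  intros p.
  rewrite (closure_flip _ _ (msum_flip _ _ _ _ (epi_conj_flip f) (epi_conj_flip g))),
          epi_conj_flip.
  symmetry; apply Hsupp.
Qed.
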